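(* Let $X\subseteq U$ be a fixed set of $|X|=m$ keys (balls), let $h:U\to[n]$ be a simple tabulation hash function, and let $y\in[n]$ be any fixed bin. If $p$ denotes the probability that $y\in h(X)$, then $$|p-p_0|\le \frac{m^{2-1/c}}{n^2},\qquad\text{and hence}\qquad \bigl|\mathbb{E}[|h(X)|]-\mu_0\bigr|\le \frac{m^{2-1/c}}{n}.$$ Moreover, if $q\in U\setminus X$ is a distinguished query key and the bin $y$ is allowed to depend on $h(q)$ (e.g. $y=h(q)$), i.e. for every $z\in[n]$, conditioned on $h(q)=z$ the bin $y$ is a fixed function of $z$ and $p$ denotes the conditional probability that $y\in h(X)$, then the weaker bound $|p-p_0|\le \frac{2m^{2-1/c}}{n^2}$ holds.
   Context: Simple tabulation hashing: the key universe is $U=[u]=\{0,\dots,u-1\}$, and each key $x\in U$ is viewed as a vector $(x[0],\dots,x[c-1])$ of $c=O(1)$ characters, each $x[i]\in\Sigma=[u^{1/c}]$. The range is $[n]=[2^r]$, viewed as $r$-bit strings. A simple tabulation hash function is $h(x)=h_0(x[0])\oplus\cdots\oplus h_{c-1}(x[c-1])$, where $h_0,\dots,h_{c-1}:\Sigma\to[2^r]$ are independent fully random functions and $\oplus$ is bitwise XOR. Notation: $p_0=1-(1-1/n)^m$ and $\mu_0=np_0$ (the probability a given bin is non-empty, resp. the expected number of non-empty bins, when $m$ balls are hashed fully randomly into $n$ bins). *)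

From HB Require Import structures.
From mathcomp Require Import all_boot all_order all_algebra.
From mathcomp Require Import all_classical all_reals all_analysis.
Set Implicit Arguments. Unset Strict Implicit. Unset Printing Implicit Defensive.
Import Order.TTheory GRing.Theory Num.Theory.

(* Characters: Sigma = 'I_s.  Keys: vectors of c characters (U = [s^c]).
   Hash values: r-bit strings, [n] = [2^r].
   A table: c independent functions h_i : Sigma -> {0,1}^r. *)
Notation bits r := {ffun 'I_r -> bool}.
Notation key c s := {ffun 'I_c -> 'I_s}.
Notation table c s r := {ffun 'I_c -> {ffun 'I_s -> bits r}}.

Definition bxor r (a b : bits r) : bits r := [ffun i => addb (a i) (b i)].
Definition bzero r : bits r := [ffun => false].

Definition tab_hash c s r (t : table c s r) (x : key c s) : bits r :=
  \big[@bxor r/bzero r]_(i < c) t i (x i).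

Definition himg c s r (t : table c s r) (X : {set key c s}) : {set bits r} :=
  [set tab_hash t x | x in X].

Local Open Scope ring_scope.

Definition prob (R : realType) c s r (E : pred (table c s r)) : R :=
  #|[set t : table c s r | E t]|%:R / #|[set: table c s r]|%:R.

Definition cprob (R : realType) c s r (E F : pred (table c s r)) : R :=
  #|[set t : table c s r | E t && F t]|%:R / #|[set t : table c s r | F t]|%:R.

Definition expect (R : realType) c s r (f : table c s r -> nat) : R :=
  (\sum_(t : table c s r) (f t)%:R) / #|[set: table c s r]|%:R.

(* Write miss(A) for the probability that the bin y is not
   hit by h(A).  Some position of a nonempty set Y of keys carries at least
   |Y|^(1/c) distinct characters, so one of them, a at position i, is shared by
   at most |Y|^(1-1/c) keys of Y: this group G is peeled off.  The entry h_i(a)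
   is used by the keys of G only, and it shifts all their hash values by the same
   uniform amount; given the other entries, y therefore escapes h(G) with
   probability 1 - |h(G)|/n, where |G| - #collisions(G) <= |h(G)| <= |G|.  As two
   distinct keys of G collide with probability 1/n, this yields
   |miss(X) - (1 - 1/n)^|G| miss(X \ G)| <= |G|^2/n^2.  Peeling all of X thus
   costs at most the sum of the |G|^2/n^2 <= |G| m^(1-1/c)/n^2, which is
   m^(2-1/c)/n^2 since the groups partition X.  Conditioning on h(q) = z
   only forbids peeling along the characters of q, which at most halves the
   number of characters available at position i. *)

From HB Require Import structures.
From mathcomp Require Import all_boot all_order all_algebra.
From mathcomp Require Import reals exp.
From mathcomp Require Import lra ring zify.
Set Implicit Arguments. Unset Strict Implicit. Unset Printing Implicit Defensive.
Import Order.TTheory GRing.Theory Num.Theory.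

Section BitXor.
Variable r : nat.
Implicit Types a b d : bits r.

Lemma bxorA : associative (@bxor r).
Proof. by move=> a b d; apply/ffunP=> i; rewrite !ffunE addbA. Qed.

Lemma bxorC : commutative (@bxor r).
Proof. by move=> a b; apply/ffunP=> i; rewrite !ffunE addbC. Qed.

Lemma bxor0b : left_id (bzero r) (@bxor r).
Proof. by move=> a; apply/ffunP=> i; rewrite !ffunE. Qed.

Lemma bxorb0 a : bxor a (bzero r) = a.
Proof. by rewrite bxorC bxor0b. Qed.

Lemma bxorbb a : bxor a a = bzero r.
Proof. by apply/ffunP=> i; rewrite !ffunE addbb. Qed.

Lemma bxorKb a b : bxor a (bxor a b) = b.
Proof. by rewrite bxorA bxorbb bxor0b. Qed.

Lemma bxorbK a b : bxor (bxor a b) b = a.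
Proof. by rewrite -bxorA bxorbb bxorb0. Qed.

Lemma bxor_eq a b d : (bxor a b == d) = (b == bxor a d).
Proof. by apply/eqP/eqP=> [<-|->]; rewrite bxorKb. Qed.

Lemma card_bits : #|{: bits r}| = 2 ^ r.
Proof. by rewrite card_ffun card_bool card_ord. Qed.

End BitXor.

HB.instance Definition _ r :=
  Monoid.isComLaw.Build (bits r) (bzero r) (@bxor r) (@bxorA r) (@bxorC r) (@bxor0b r).

Lemma card_in_sum (T : finType) (S : {set T}) (P : pred T) :
  #|[set t in S | P t]| = \sum_(t in S) P t.
Proof.
rewrite -sum1_card big_mkcond [RHS]big_mkcond; apply: eq_bigr => t _.
by rewrite inE; case: (t \in S); case: (P t).
Qed.

Lemma sum_card_sets (T U : finType) (A : T -> {set U}) :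
  \sum_t #|A t| = \sum_u #|[set t | u \in A t]|.
Proof.
transitivity (\sum_t \sum_u (u \in A t : nat)); last first.
  rewrite exchange_big; apply: eq_bigr => u _.
  by rewrite -sum1_card [RHS]big_mkcond; apply: eq_bigr => t _; rewrite inE.
by apply: eq_bigr => t _; rewrite -sum1_card big_mkcond.
Qed.

Lemma exists_ffun_neq (aT : finType) (rT : eqType) (f g : {ffun aT -> rT}) :
  f != g -> exists i, f i != g i.
Proof.
move=> fg; apply/existsP; apply: contraNT fg => /existsPn fg.
by apply/eqP/ffunP => i; apply/eqP/negbNE.
Qed.

Definition collisions (A B : finType) (f : A -> B) (G : {set A}) : {set A * A} :=
  [set p | [&& p.1 \in G, p.2 \in G, p.1 != p.2 & f p.1 == f p.2]].

Lemma card_le_imset_collisions (A B : finType) (f : A -> B) (G : {set A}) :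
  #|G| <= #|f @: G| + #|collisions f G|.
Proof.
(* Each x in G is the chosen representative of its f-class, or collides with it. *)
pose rep x := odflt x [pick x' in G | f x' == f x].
have repP x : x \in G -> rep x \in G /\ f (rep x) = f x.
  rewrite /rep => xG; case: pickP => [x' /andP[x'G /eqP //] | /(_ x)].
  by rewrite xG eqxx.
have rep_f x x' : x \in G -> f x = f x' -> rep x = rep x'.
  rewrite /rep => xG fx; rewrite fx; case: pickP => // /(_ x).
  by rewrite xG fx eqxx.
have cover : G \subset rep @: G :|: [set x in G | rep x != x].
  apply/subsetP => x xG; rewrite !inE xG /=.
  by case: (eqVneq (rep x) x) => [<-|]; rewrite ?imset_f ?orbT.
apply: leq_trans (subset_leq_card cover) _; apply: leq_trans (leq_card_setU _ _) _.
apply: leq_add.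
  rewrite -(@card_in_imset _ _ f (rep @: G)).
    apply/subset_leq_card/subsetP => _ /imsetP[_ /imsetP[x xG ->] ->].
    by rewrite (repP x xG).2 imset_f.
  move=> _ _ /imsetP[x xG ->] /imsetP[x' x'G ->].
  by rewrite (repP x xG).2 (repP x' x'G).2; apply: rep_f.
rewrite -(@card_imset _ _ (fun x => (x, rep x))) => [|x x' [] //].
apply/subset_leq_card/subsetP => _ /imsetP[x /setIdP[xG nx] ->].
by rewrite inE /= xG (repP x xG).1 eq_sym nx (repP x xG).2 eqxx.
Qed.

Section RealBounds.
Local Open Scope ring_scope.
Variable R : realFieldType.
Implicit Types x : R.

Lemma bernoulli_lb x g : 0 <= x <= 1 -> 1 - g%:R * x <= (1 - x) ^+ g.
Proof.
move=> /andP[x0 x1]; elim: g => [|k IH]; first by rewrite expr0 mul0r subr0.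
rewrite exprS -natr1; apply: le_trans (ler_wpM2l _ IH); last by lra.
have : 0 <= k%:R * x * x :> R by rewrite !mulr_ge0.
nra.
Qed.

Lemma bernoulli_ub x g : 0 <= x <= 1 ->
  (1 - x) ^+ g <= 1 - g%:R * x + g%:R ^+ 2 * x ^+ 2.
Proof.
move=> /andP[x0 x1]; elim: g => [|k IH].
  by rewrite expr0 mul0r subr0 expr0n mul0r addr0.
rewrite exprS -natr1; apply: le_trans (ler_wpM2l _ IH) _; first by lra.
have k0 : 0 <= k%:R :> R by [].
have : 0 <= k%:R ^+ 2 * x ^+ 3 :> R by rewrite mulr_ge0 ?exprn_ge0.
have : 0 <= k%:R * x ^+ 2 :> R by rewrite mulr_ge0 ?exprn_ge0.
rewrite !expr2 !exprS expr0 ?mulr1.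
nra.
Qed.

Lemma ler_norm_chain (p p' b b' e e' : R) : 0 <= b <= 1 ->
  `|p - b * p'| <= e -> `|p' - b'| <= e' -> `|p - b' * b| <= e + e'.
Proof.
move=> /andP[b0 b1] le_e le_e'.
have -> : p - b' * b = (p - b * p') + b * (p' - b') by ring.
apply: le_trans (ler_normD _ _) (lerD le_e _); rewrite normrM ger0_norm //.
by apply: le_trans le_e'; rewrite ler_piMl.
Qed.

Lemma dist1B (u v : R) : `|(1 - u) - (1 - v)| = `|u - v|.
Proof. by rewrite -normrN; congr `|_|; ring. Qed.

End RealBounds.

Section Entries.
Variables c s r : nat.
Local Notation table := (table c s r).
Local Notation key := (key c s).
Implicit Types (t : table) (x : key) (S : {set table}) (i j : 'I_c) (a b : 'I_s).
Implicit Types (v w : bits r).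

Definition set_entry t i a v : table :=
  [ffun j => [ffun b => if (j == i) && (b == a) then v else t j b]].

Lemma set_entryE t i a v j b :
  set_entry t i a v j b = if (j == i) && (b == a) then v else t j b.
Proof. by rewrite !ffunE. Qed.

Lemma set_entry_id t i a : set_entry t i a (t i a) = t.
Proof.
apply/ffunP=> j; apply/ffunP=> b; rewrite set_entryE.
by case: eqP => [->|] //=; case: eqP => [->|].
Qed.

Lemma set_set_entry t i a v w : set_entry (set_entry t i a v) i a w = set_entry t i a w.
Proof. by apply/ffunP=> j; apply/ffunP=> b; rewrite !set_entryE; case: (_ && _). Qed.

Lemma set_entry_same t i a v : set_entry t i a v i a = v.
Proof. by rewrite set_entryE !eqxx. Qed.

Lemma set_entry_other t i a v j b : j != i -> set_entry t i a v j b = t j b.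
Proof. by rewrite set_entryE => /negbTE->. Qed.

Lemma tab_hash_set_entry_out t i a v x :
  x i != a -> tab_hash (set_entry t i a v) x = tab_hash t x.
Proof.
move=> xia; apply: eq_bigr => j _; rewrite set_entryE.
by case: eqP => [->|] //=; rewrite (negbTE xia).
Qed.

Lemma tab_hashD1 t i x :
  tab_hash t x = bxor (t i (x i)) (\big[@bxor r/bzero r]_(j | j != i) t j (x j)).
Proof. by rewrite /tab_hash (bigD1 i). Qed.

Lemma tab_hash_set_entry_in t i a v x : x i = a ->
  tab_hash (set_entry t i a v) x = bxor (bxor v (t i a)) (tab_hash t x).
Proof.
move=> xia; rewrite !(tab_hashD1 _ i) xia set_entry_same -!bxorA bxorKb.
by congr bxor; apply: eq_bigr => j ji; rewrite set_entry_other.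
Qed.

Lemma tab_hash_onto x z : 0 < c -> exists t, tab_hash t x = z.
Proof.
move=> c_gt0; pose i := Ordinal c_gt0; pose t0 : table := [ffun=> [ffun=> bzero r]].
have hash_t0 : tab_hash t0 x = bzero r by apply: big1 => j _; rewrite !ffunE.
by exists (set_entry t0 i (x i) z); rewrite tab_hash_set_entry_in // hash_t0 !ffunE !bxorb0.
Qed.

Definition entry_closed S i a := forall t v, t \in S -> set_entry t i a v \in S.

Definition zero_fibre S i a := [set t in S | t i a == bzero r].

Section Fibre.
Variables (S : {set table}) (i : 'I_c) (a : 'I_s).
Hypothesis S_closed : entry_closed S i a.

Lemma sum_zero_fibre (F : table -> nat) :
  \sum_(t in S) F t = \sum_(t in zero_fibre S i a) \sum_v F (set_entry t i a v).
Proof.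
rewrite pair_big /= (reindex (fun t => (set_entry t i a (bzero r), t i a))) /=.
  apply: eq_big => t; last by rewrite set_set_entry set_entry_id.
  rewrite !inE set_entry_same eqxx !andbT; apply/idP/idP; first exact: S_closed.
  by move=> /(S_closed (t i a)); rewrite set_set_entry set_entry_id.
exists (fun p => set_entry p.1 i a p.2) => [t _|[t v]].
  by rewrite /= set_set_entry set_entry_id.
rewrite !inE /= andbT => /andP[_ /eqP t0].
by rewrite set_set_entry set_entry_same -t0 set_entry_id.
Qed.

Lemma card_zero_fibre : #|S| = 2 ^ r * #|zero_fibre S i a|.
Proof.
rewrite -!sum1_card sum_zero_fibre mulnC big_distrl /=; apply: eq_bigr => t _.
by rewrite sum1_card card_bits mul1n.
Qed.

Lemma card_hash_collision x x' : x i = a -> x' i != a ->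
  2 ^ r * #|[set t in S | tab_hash t x == tab_hash t x']| = #|S|.
Proof.
move=> xia x'ia; rewrite card_in_sum sum_zero_fibre card_zero_fibre -sum1_card.
rewrite !big_distrr /=; apply: eq_bigr => t; rewrite inE => /andP[_ /eqP t0].
set w := bxor (tab_hash t x) (tab_hash t x').
have collide v : (tab_hash (set_entry t i a v) x == tab_hash (set_entry t i a v) x')
    = (v == w).
  by rewrite tab_hash_set_entry_in // tab_hash_set_entry_out // t0 bxorb0 bxorC bxor_eq.
under eq_bigr do rewrite collide.
by rewrite (bigD1 w) //= eqxx big1 // => v /negbTE->.
Qed.

End Fibre.
End Entries.

(* [free i a] marks the entries h_i(a) that may be resampled: the conditioning
   event of the main argument is closed under changing them. *)
Definition separated c s (free : 'I_c -> 'I_s -> bool) (X : {set key c s}) :=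
  forall x x', x \in X -> x' \in X -> x != x' ->
  exists2 j, x j != x' j & free j (x j) || free j (x' j).

Definition peelable (R : numDomainType) c s (free : 'I_c -> 'I_s -> bool) (L : R)
    (X : {set key c s}) :=
  forall Y : {set key c s}, Y \subset X -> Y != set0 -> exists i a,
    [/\ free i a, 0 < #|[set x in Y | x i == a]| & (#|[set x in Y | x i == a]|%:R <= L)%R].

Lemma separatedS c s (free : 'I_c -> 'I_s -> bool) (X Y : {set key c s}) :
  Y \subset X -> separated free X -> separated free Y.
Proof. by move=> /subsetP YX X_sep x x' /YX xX /YX x'X; apply: X_sep. Qed.

Lemma peelableS (R : numDomainType) c s (free : 'I_c -> 'I_s -> bool) (L : R)
    (X Y : {set key c s}) :
  Y \subset X -> peelable free L X -> peelable free L Y.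
Proof. by move=> YX X_peel Z ZY; apply: X_peel; apply: subset_trans YX. Qed.

Section Peeling.
Variables (R : realFieldType) (c s r : nat) (free : 'I_c -> 'I_s -> bool).
Variables (S : {set table c s r}) (y : bits r).
Hypothesis S_closed : forall i a, free i a -> entry_closed S i a.
Hypothesis S_gt0 : 0 < #|S|.
Local Notation key := (key c s).
Local Notation table := (table c s r).
Local Open Scope ring_scope.
Local Notation n := ((2 ^ r)%:R : R).
Local Notation beta := (1 - n^-1).
Implicit Types t : table.

Definition miss (A : {set key}) : R :=
  #|[set t in S | y \notin himg t A]|%:R / #|S|%:R.

Lemma miss_compl A : #|[set t in S | y \in himg t A]|%:R / #|S|%:R = 1 - miss A.
Proof.
have cardS : (#|[set t in S | y \in himg t A]| + #|[set t in S | y \notin himg t A]|)%N = #|S|.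
  by rewrite !card_in_sum -big_split -sum1_card; apply: eq_bigr => t _; case: (y \in _).
move: S_gt0; rewrite /miss -cardS -(ltr0n R) natrD => S0.
by field; rewrite gt_eqF.
Qed.

Lemma n_gt0 : 0 < n.
Proof. by rewrite ltr0n expn_gt0. Qed.

Lemma expr_beta_bounds g : n - g%:R <= n * beta ^+ g <= n - g%:R + g%:R ^+ 2 / n.
Proof.
have n0 := n_gt0.
have x01 : 0 <= n^-1 <= 1 by rewrite invr_ge0 ltW //= invf_le1 // ler1n expn_gt0.
apply/andP; split.
  apply: le_trans (ler_wpM2l (ltW n0) (bernoulli_lb g x01)).
  by rewrite mulrBr mulr1 mulrCA mulfV ?gt_eqF ?mulr1.
apply: le_trans (ler_wpM2l (ltW n0) (bernoulli_ub g x01)) _.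
by rewrite le_eqVlt; apply/orP; left; apply/eqP; field; rewrite gt_eqF.
Qed.

Section Step.
Variables (X : {set key}) (i : 'I_c) (a : 'I_s).
Hypotheses (free_ia : free i a) (X_sep : separated free X).
Local Notation G := [set x in X | x i == a].
Local Notation X' := [set x in X | x i != a].
Local Notation F := (zero_fibre S i a).

(* The values of the entry h_i(a) for which y lands in h(G), given that
   t i a = 0 and the other entries are those of t. *)
Definition shifted_image t := [set bxor y (tab_hash t x) | x in G].

Lemma himg_peel t : himg t X = himg t X' :|: himg t G.
Proof.
have eX : X' :|: G = X.
  by apply/setP => x; rewrite !inE; case: (x \in X); case: (x i == a).
by rewrite -{1}eX /himg imsetU.
Qed.

Lemma himg_rest_set_entry t v : himg (set_entry t i a v) X' = himg t X'.
Proof.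
by apply: eq_in_imset => x; rewrite inE => /andP[_ xia]; rewrite tab_hash_set_entry_out.
Qed.

Lemma card_miss_peeled : #|[set t in S | y \notin himg t X]|%N =
  (\sum_(t in F) (y \notin himg t X') * (2 ^ r - #|shifted_image t|))%N.
Proof.
rewrite card_in_sum (sum_zero_fibre (S_closed free_ia)).
apply: eq_bigr => t; rewrite inE => /andP[_ /eqP t0].
have hitG v : (y \in himg (set_entry t i a v) G) = (v \in shifted_image t).
  apply/imsetP/imsetP => -[x xG ->]; exists x => //; have /setIdP[_ /eqP xia] := xG;
  by rewrite tab_hash_set_entry_in // t0 bxorb0 bxorbK.
under eq_bigr => v _ do
  rewrite himg_peel in_setU negb_or himg_rest_set_entry hitG.
case: (y \notin _) => /=; last by rewrite big1.
rewrite mul1n -card_bits -(cardsC (shifted_image t)) addKn -sum1_card [RHS]big_mkcond /=.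
by apply: eq_bigr => v _; rewrite in_setC; case: (v \in _).
Qed.

Lemma card_miss_rest : #|[set t in S | y \notin himg t X']|%N =
  (\sum_(t in F) (y \notin himg t X') * 2 ^ r)%N.
Proof.
rewrite card_in_sum (sum_zero_fibre (S_closed free_ia)); apply: eq_bigr => t _.
under eq_bigr do rewrite himg_rest_set_entry.
by rewrite sum_nat_const card_bits mulnC.
Qed.

Lemma zero_fibre_closed j b : j != i -> free j b -> entry_closed F j b.
Proof.
move=> ji fjb t v; rewrite !inE => /andP[tS /eqP t0].
by rewrite set_entry_other 1?eq_sym // t0 eqxx andbT; apply: S_closed.
Qed.

(* Distinct keys of G collide on exactly a 1/n fraction of F: resample a free
   entry at a position where they differ. *)
Lemma sum_card_collisions :
  (2 ^ r * \sum_(t in F) #|collisions (tab_hash t) G| <= #|G| ^ 2 * #|F|)%N.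
Proof.
have collisionsE t : #|collisions (tab_hash t) G| =
    (\sum_(p in setX G G) (p.1 != p.2) && (tab_hash t p.1 == tab_hash t p.2))%N.
  rewrite -card_in_sum; apply: eq_card => p; rewrite !inE.
  by case: (p.1 \in X); case: (p.2 \in X); case: (p.1 i == a); case: (p.2 i == a).
under eq_bigr do rewrite collisionsE.
rewrite exchange_big /= big_distrr /= -mulnn -cardsX -sum_nat_const.
apply: leq_sum => -[x x'] /setXP[xG x'G] /=.
have [_|xx'] := eqVneq x x'; first by rewrite big1 ?muln0.
have /setIdP[xX /eqP xia] := xG; have /setIdP[x'X /eqP x'ia] := x'G.
have [j xj free_j] := X_sep xX x'X xx'.
have ji : j != i by apply: contraNneq xj => ->; rewrite xia x'ia.
rewrite /= -card_in_sum.
case/orP: free_j => free_j.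
  by rewrite (card_hash_collision (zero_fibre_closed ji free_j)) // eq_sym.
rewrite -(card_hash_collision (zero_fibre_closed ji free_j) (x := x') (x' := x)) //.
apply: eq_leq; congr (_ * _).
by apply: eq_card => t; rewrite !inE [tab_hash t x' == _]eq_sym.
Qed.

(* The contribution of the fibre of t to n #|F| (miss X - beta^|G| miss X'). *)
Definition peel_error t : R :=
  ((y \notin himg t X') * (2 ^ r - #|shifted_image t|))%:R
  - beta ^+ #|G| * ((y \notin himg t X') * 2 ^ r)%:R.

Lemma peel_error_bounds t :
  - (#|G|%:R ^+ 2 / n) <= peel_error t <= #|collisions (tab_hash t) G|%:R.
Proof.
have n0 := n_gt0.
have err_ge0 : 0 <= #|G|%:R ^+ 2 / n by rewrite divr_ge0 ?exprn_ge0 ?ler0n // ltW.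
rewrite /peel_error; case: (y \notin _) => /=;
  last by rewrite !mul0n !mulr0n mulr0 subr0 oppr_le0 err_ge0 ler0n.
rewrite !mul1n natrB; last by rewrite -card_bits max_card.
have : (#|G| <= #|shifted_image t| + #|collisions (tab_hash t) G|)%N.
  have -> : collisions (tab_hash t) G = collisions (fun x => bxor y (tab_hash t x)) G.
    by apply/setP => p; rewrite !inE bxor_eq bxorKb.
  exact: card_le_imset_collisions.
have : (#|shifted_image t| <= #|G|)%N by apply: leq_imset_card.
rewrite -!(ler_nat R) natrD [beta ^+ _ * _]mulrC => W_le G_le.
have /andP[] := expr_beta_bounds #|G|; move: W_le G_le err_ge0.
move: #|G|%:R #|shifted_image t|%:R #|collisions _ _|%:R (n * _) (_ ^+ 2 / n).
by move=> g w col nb e *; apply/andP; split; lra.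
Qed.

Lemma miss_peel : `|miss X - beta ^+ #|G| * miss X'| <= #|G|%:R ^+ 2 / n ^+ 2.
Proof.
have n0 := n_gt0.
have cardS := card_zero_fibre (S_closed free_ia).
have F_gt0 : 0 < #|F|%:R :> R.
  by move: S_gt0; rewrite cardS muln_gt0 ltr0n => /andP[].
have -> : miss X - beta ^+ #|G| * miss X' = (\sum_(t in F) peel_error t) / (n * #|F|%:R).
  rewrite /miss card_miss_peeled card_miss_rest cardS natrM mulrA -mulrBl.
  by rewrite /peel_error sumrB !natr_sum mulr_sumr.
have sum_ub : \sum_(t in F) peel_error t <= #|G|%:R ^+ 2 * #|F|%:R / n.
  apply: le_trans (ler_sum _ (fun t _ => (andP (peel_error_bounds t)).2)) _.
  rewrite -natr_sum ler_pdivlMr // -natrX -!natrM ler_nat mulnC.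
  exact: sum_card_collisions.
have sum_lb : - (#|G|%:R ^+ 2 * #|F|%:R / n) <= \sum_(t in F) peel_error t.
  apply: le_trans _ (ler_sum _ (fun t _ => (andP (peel_error_bounds t)).1)).
  by rewrite sumr_const -[X in _ <= X]mulr_natr mulNr mulrAC.
rewrite normrM [`|_^-1|]ger0_norm ?invr_ge0 ?mulr_ge0 ?ler0n // ler_pdivrMr ?mulr_gt0 //.
have -> : #|G|%:R ^+ 2 / n ^+ 2 * (n * #|F|%:R) = #|G|%:R ^+ 2 * #|F|%:R / n.
  by field; rewrite gt_eqF.
by rewrite ler_norml sum_lb sum_ub.
Qed.

End Step.

Lemma beta_ge0 : 0 <= beta.
Proof. by rewrite subr_ge0 invf_le1 ?n_gt0 // ler1n expn_gt0. Qed.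

Lemma beta_le1 : beta <= 1.
Proof. by rewrite lerBlDr lerDl invr_ge0 ltW ?n_gt0. Qed.

Lemma miss0 : miss set0 = 1.
Proof.
rewrite /miss; have -> : [set t in S | y \notin himg t set0] = S.
  by apply/setP => t; rewrite !inE /himg imset0 inE andbT.
by rewrite divff // pnatr_eq0 -lt0n.
Qed.

Lemma miss_peelable (L : R) X : separated free X -> peelable free L X ->
  `|miss X - beta ^+ #|X| | <= #|X|%:R * L / n ^+ 2.
Proof.
have [k] := ubnP #|X|; elim: k X => // k IH X Xk X_sep X_peel.
have [->|X0] := eqVneq X set0; first by rewrite miss0 cards0 expr0 subrr normr0 !mul0r.
have [i [a [free_ia G_gt0 G_le]]] := X_peel X (subxx X) X0.
set G := [set x in X | x i == a] in G_gt0 G_le *.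
set X' := [set x in X | x i != a].
have cardX : #|X| = (#|X'| + #|G|)%N.
  by rewrite !card_in_sum -big_split -sum1_card; apply: eq_bigr => x _; case: (x i == a).
have X'X : X' \subset X by apply/subsetP => x; rewrite inE => /andP[].
have IH_X' := IH X' _ (separatedS X'X X_sep) (peelableS X'X X_peel).
have := miss_peel free_ia X_sep; rewrite -/G -/X' => step.
rewrite cardX exprD natrD !mulrDl [X in _ <= X]addrC.
apply: ler_norm_chain (IH_X' _); first by rewrite exprn_ge0 ?exprn_ile1 ?beta_ge0 ?beta_le1.
  apply: le_trans step _; rewrite ler_pM2r ?invr_gt0 ?exprn_gt0 ?n_gt0 //.
  by rewrite expr2 ler_pM2l ?ltr0n.
by move: Xk; rewrite cardX; lia.
Qed.

End Peeling.

Section Classes.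
Variables c s : nat.
Local Notation key := (key c s).
Implicit Types (X Y : {set key}) (i : 'I_c) (a : 'I_s).

Definition proj Y i : {set 'I_s} := [set x i | x : key in Y].

Lemma card_le_prod_proj Y : #|Y| <= \prod_(i < c) #|proj Y i|.
Proof.
have Y_family : Y \subset family (fun i => mem (proj Y i)).
  by apply/subsetP => x xY; apply/familyP => i; apply: imset_f.
apply: leq_trans (subset_leq_card Y_family) _.
by rewrite card_family foldrE big_map big_enum.
Qed.

Lemma exists_wide_proj Y : 0 < c -> exists i, #|Y| <= #|proj Y i| ^ c.
Proof.
move=> c_gt0.
have [i _ i_max] := @arg_maxnP _ (Ordinal c_gt0) predT (fun i => #|proj Y i|) isT.
exists i; apply: leq_trans (card_le_prod_proj Y) _.
by rewrite -[in X in _ ^ X](card_ord c) -prod_nat_const; apply: leq_prod => j _; apply: i_max.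
Qed.

Lemma sum_card_classes Y i (V : {set 'I_s}) :
  \sum_(a in V) #|[set x in Y | x i == a]| <= #|Y|.
Proof.
under eq_bigr do rewrite card_in_sum.
rewrite exchange_big /= -sum1_card; apply: leq_sum => x _.
rewrite (big_mkcond (mem V)) (bigD1 (x i)) //= big1 => [|a /negbTE ax].
  by rewrite eqxx addn0; case: (x i \in V).
by rewrite eq_sym ax if_same.
Qed.

Lemma exists_small_class Y i (V : {set 'I_s}) : V \subset proj Y i -> V != set0 ->
  exists2 a, a \in V &
    0 < #|[set x in Y | x i == a]| /\ #|[set x in Y | x i == a]| * #|V| <= #|Y|.
Proof.
move=> VY /set0Pn[a0 a0V].
have [a aV a_min] := @arg_minnP _ a0 (mem V) (fun a => #|[set x in Y | x i == a]|) a0V.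
exists a => //; split.
  have /imsetP[x xY xia] := subsetP VY a aV.
  by apply/card_gt0P; exists x; rewrite inE xY xia eqxx.
apply: leq_trans (sum_card_classes Y i V); rewrite mulnC -sum_nat_const.
by apply: leq_sum => b bV; apply: a_min.
Qed.

Local Open Scope ring_scope.

(* g <= C k / D <= C k / k^(1/c) = C k^(1-1/c) <= C m^(1-1/c) *)
Lemma class_size_bound (R : realType) (g D k m C : nat) : (0 < c)%N -> (0 < k <= m)%N ->
  (k <= D ^ c)%N -> (g * D <= C * k)%N -> g%:R <= C%:R * m%:R `^ (1 - c%:R^-1) :> R.
Proof.
move=> c_gt0 /andP[k_gt0 km] k_le hD.
set p : R := c%:R^-1.
have p_ge0 : 0 <= p by rewrite invr_ge0.
have p_le1 : p <= 1 by rewrite invf_le1 ?ltr0n // ler1n.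
have kR : 0 < k%:R :> R by rewrite ltr0n.
have root_k : k%:R `^ p <= D%:R.
  have : k%:R <= D%:R `^ c%:R :> R by rewrite powR_mulrn // -natrX ler_nat.
  move=> /(ge0_ler_powR p_ge0); rewrite !nnegrE powR_ge0 ler0n => /(_ isT isT).
  by rewrite -powRrM mulfV ?pnatr_eq0 -?lt0n // powRr1.
have split_k : k%:R = k%:R `^ (1 - p) * k%:R `^ p :> R.
  by rewrite -powRD ?subrK ?powRr1 ?ltW //; apply/implyP => _; rewrite gt_eqF.
have g_le : g%:R <= C%:R * k%:R `^ (1 - p) :> R.
  rewrite -(ler_pM2r (powR_gt0 p kR)) -mulrA -split_k.
  apply: le_trans (_ : g%:R * D%:R <= _); first by rewrite ler_wpM2l.
  by rewrite -!natrM ler_nat.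
apply: le_trans g_le _; rewrite ler_wpM2l //.
by apply: ge0_ler_powR; rewrite ?nnegrE ?subr_ge0 ?ler_nat.
Qed.

Lemma separated_all X : separated (fun _ _ => true) X.
Proof. by move=> x x' _ _ /exists_ffun_neq[j]; exists j. Qed.

Lemma separated_avoid (q : key) X : separated (fun j b => b != q j) X.
Proof.
move=> x x' _ _ /exists_ffun_neq[j xj]; exists j => //.
by apply: contraR xj; rewrite negb_or !negbK => /andP[/eqP-> /eqP->].
Qed.

Lemma peelable_all (R : realType) X : (0 < c)%N ->
  peelable (fun _ _ => true) (#|X|%:R `^ (1 - c%:R^-1) : R) X.
Proof.
move=> c_gt0 Y YX Y0; have [i wide_i] := exists_wide_proj Y c_gt0.
have projY0 : proj Y i != set0.
  by apply: contraNneq Y0 => /eqP; rewrite imset_eq0.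
have [a _ [class_gt0 class_le]] := exists_small_class (subxx _) projY0.
exists i, a; split => //; rewrite -[X in _ <= X]mul1r.
apply: (@class_size_bound R _ _ _ _ 1%N c_gt0 _ wide_i); last by rewrite mul1n.
by rewrite card_gt0 Y0 subset_leq_card.
Qed.

Lemma peelable_avoid (R : realType) (q : key) X : (0 < c)%N -> q \notin X ->
  peelable (fun j b => b != q j) (2%:R * #|X|%:R `^ (1 - c%:R^-1) : R) X.
Proof.
move=> c_gt0 qX Y YX Y0.
have Y_bounds : (0 < #|Y| <= #|X|)%N by rewrite card_gt0 Y0 subset_leq_card.
have [i wide_i] := exists_wide_proj Y c_gt0.
have [proj_le1 | proj_gt1] := leqP #|proj Y i| 1.
  have /cards1P[x Yx] : #|Y| == 1%N.
    rewrite eqn_leq card_gt0 Y0 andbT (leq_trans wide_i) //.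
    by rewrite -(exp1n c) leq_exp2r.
  have /exists_ffun_neq[j xj] : x != q.
    by apply: contraNneq qX => <-; apply: (subsetP YX); rewrite Yx set11.
  have class_Y : [set x' in Y | x' j == x j] = Y.
    by apply/setP => x'; rewrite Yx !inE; case: eqP => // ->; rewrite eqxx.
  exists j, (x j); rewrite class_Y; split => //; first by rewrite card_gt0.
  by apply: (@class_size_bound R _ 1 _ _ 2 c_gt0 Y_bounds); rewrite Yx cards1 ?exp1n.
set V := proj Y i :\ q i.
have V_half : (#|proj Y i| <= 2 * #|V|)%N.
  move: proj_gt1; rewrite (cardsD1 (q i)) -/V mul2n -addnn leq_add2r.
  by case: (_ \in _) => //=; rewrite add1n ltnS.
have V0 : V != set0 by rewrite -card_gt0; lia.
have [a aV [class_gt0 class_le]] := exists_small_class (subsetDl _ _) V0.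
exists i, a; split => //; first by move: aV; rewrite !inE => /andP[].
apply: (@class_size_bound R _ _ _ _ 2 c_gt0 Y_bounds wide_i).
apply: leq_trans (leq_mul (leqnn _) V_half) _.
by rewrite mulnCA leq_mul2l class_le orbT.
Qed.

End Classes.

Local Open Scope ring_scope.

Lemma powR_mul_self (R : realType) (m c : nat) : (0 < c)%N ->
  m%:R * m%:R `^ (1 - c%:R^-1) = m%:R `^ (2 - c%:R^-1) :> R.
Proof.
move=> c_gt0; have c_inv_le1 : c%:R^-1 <= 1 :> R by rewrite invf_le1 ?ltr0n // ler1n.
rewrite -(@mulr_powRB1 R _ (2 - c%:R^-1) (ler0n _ m)); last by lra.
by congr (_ * _ `^ _); ring.
Qed.

Lemma expect_card_himg (R : realType) c s r (X : {set key c s}) :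
  expect R (fun t : table c s r => #|himg t X|)
  = \sum_(y : bits r) prob R (fun t : table c s r => y \in himg t X).
Proof. by rewrite /expect -natr_sum sum_card_sets natr_sum mulr_suml. Qed.

Section HitProbability.
Variables (R : realType) (c s r : nat) (X : {set key c s}).
Hypothesis c_gt0 : (0 < c)%N.
Local Notation table := (table c s r).
Local Notation n := ((2 ^ r)%:R : R).
Local Notation L := (#|X|%:R `^ (1 - c%:R^-1) : R).

Lemma prob_hit y :
  `|prob R (fun t : table => y \in himg t X) - (1 - (1 - n^-1) ^+ #|X|)|
    <= #|X|%:R * L / n ^+ 2.
Proof.
have T_gt0 : (0 < #|[set: table]|)%N.
  by apply/card_gt0P; exists [ffun=> [ffun=> bzero r]]; rewrite inE.
have T_closed i a : true -> entry_closed [set: table] i a by move=> _ t v _; rewrite inE.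
have -> : prob R (fun t : table => y \in himg t X) = 1 - miss R [set: table] y X.
  by rewrite -miss_compl // /prob; congr (_%:R / _); apply: eq_card => t; rewrite !inE.
rewrite dist1B; apply: (miss_peelable y T_closed T_gt0 (separated_all (X := X))).
exact: peelable_all.
Qed.

Lemma cprob_hit q f z : q \notin X ->
  `|cprob R (fun t : table => f z \in himg t X) (fun t : table => tab_hash t q == z)
    - (1 - (1 - n^-1) ^+ #|X|)| <= #|X|%:R * (2 * L) / n ^+ 2.
Proof.
move=> qX; set S := [set t : table | tab_hash t q == z].
have S_closed j b : b != q j -> entry_closed S j b.
  by move=> bq t v; rewrite !inE tab_hash_set_entry_out // eq_sym.
have S_gt0 : (0 < #|S|)%N.
  by have [t tq] := tab_hash_onto q z c_gt0; apply/card_gt0P; exists t; rewrite inE tq.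
have -> : cprob R (fun t => f z \in himg t X) (fun t => tab_hash t q == z)
    = 1 - miss R S (f z) X.
  by rewrite -miss_compl // /cprob; congr (_%:R / _%:R); apply: eq_card => t; rewrite !inE andbC.
rewrite dist1B; apply: (miss_peelable (f z) S_closed S_gt0 (separated_avoid q (X := X))).
exact: peelable_avoid.
Qed.

End HitProbability.

Unset Implicit Arguments.

Theorem theorem1 (R : realType) (c s r m : nat) (X : {set key c s}) :
  (0 < c)%N -> (0 < s)%N -> #|X| = m ->
  let n : R := (2 ^ r)%:R in
  let p0 : R := 1 - (1 - n^-1) ^+ m in
  let B : R := (m%:R : R) `^ (2 - c%:R^-1) in
  (forall y : bits r,
      `| prob R (fun t : table c s r => y \in himg t X) - p0 | <= B / n ^+ 2)
  /\ `| expect R (fun t : table c s r => #|himg t X|) - n * p0 | <= B / n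
  /\ (forall q : key c s, q \notin X ->
        forall (f : bits r -> bits r) (z : bits r),
        `| cprob R (fun t : table c s r => f z \in himg t X) (fun t : table c s r => tab_hash t q == z) - p0 |
          <= 2 * B / n ^+ 2).
Proof.
move=> c_gt0 _ Xm n p0 B.
have B_split : B = m%:R * m%:R `^ (1 - c%:R^-1) by rewrite powR_mul_self.
have hit y : `|prob R (fun t : table c s r => y \in himg t X) - p0| <= B / n ^+ 2.
  by rewrite /p0 B_split -Xm; apply: prob_hit.
split => //; split; last first.
  by move=> q qX f z; rewrite /p0 B_split -Xm mulrCA; apply: cprob_hit.
have -> : n * p0 = \sum_(y : bits r) p0 by rewrite sumr_const card_bits -mulr_natl.
rewrite expect_card_himg -sumrB; apply: le_trans (ler_norm_sum _ _ _) _.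
apply: le_trans (ler_sum _ (fun y _ => hit y)) _.
rewrite sumr_const card_bits -mulr_natl -/n expr2 invfM mulrCA [n * _]mulrA mulfV ?mul1r //.
by rewrite /n pnatr_eq0 expn_eq0.
Qed.
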